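(* Consider $\min_u F(u)+G(u)$ under the assumptions below, with $G$ additionally convex. Let $\{(y^t,z^t,x^t)\}$ be generated by the modified PR iteration with $\gamma\in(0,\frac1{12L_F})$, and let $(\bar y,\bar z,\bar x)$ be any cluster point of this sequence. Then $\bar y=\bar z$ and $\bar z$ is a minimizer of $F+G$. Moreover, for every $N\ge1$, \[ F(\bar z^N)+G(\bar z^N)-F(\bar z)-G(\bar z)\le\frac{1}{40\gamma N L_F}\left(\frac1\gamma-5L_F\right)\|x^0-\bar x\|^2, \] where $\bar z^N:=\frac1N\sum_{t=1}^N z^t$, and \[ \min_{0\le t\le N}\|x^{t+1}-x^t\|=o\!\left(\frac{1}{\sqrt N}\right)\quad (N\to\infty). \]
   Context: Assumptions: $F:\mathbb{R}^n\to\mathbb{R}$ is convex and differentiable with $\nabla F$ Lipschitz continuous with modulus at most $L_F>0$; $G:\mathbb{R}^n\to(-\infty,\infty]$ is proper, lower semicontinuous, and $\operatorname{Argmin}_u\{\tau G(u)+\frac12\|u-w\|^2\}$ is nonempty for every $w$ and every $\tau>0$; $F+G$ is coercive. Modified PR iteration: given $x^0$ and $\gamma\in(0,\frac1{12L_F})$, for $t=0,1,\dots$: $y^{t+1}=\operatorname{argmin}_y\{F(y)+\frac{5L_F}{2}\|y\|^2+\frac1{2\gamma}\|y-x^t\|^2\}$; $z^{t+1}\in\operatorname{Argmin}_z\{G(z)-\frac{5L_F}{2}\|z\|^2+\frac1{2\gamma}\|2y^{t+1}-x^t-z\|^2\}$; $x^{t+1}=x^t+2(z^{t+1}-y^{t+1})$.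 *)

From Stdlib Require Import Reals.
From mathcomp Require Import ssreflect ssrbool ssrfun eqtype ssrnat seq fintype bigop.

Set Implicit Arguments.
Unset Strict Implicit.

Local Open Scope R_scope.

Definition vec (n : nat) := 'I_n -> R.

Definition vadd {n} (u v : vec n) : vec n := fun i => u i + v i.
Definition vsub {n} (u v : vec n) : vec n := fun i => u i - v i.
Definition vscal {n} (a : R) (u : vec n) : vec n := fun i => a * u i.

Definition inner {n} (u v : vec n) : R := \big[Rplus/0]_(i < n) (u i * v i).
Definition norm {n} (u : vec n) : R := sqrt (inner u u).

(** Extended reals (-oo excluded): values of proper functions R^n -> (-oo, +oo]. *)
Inductive Rbar : Type := Fin (r : R) | Pinf.

Definition Rbar_le (a b : Rbar) : Prop :=
  match a, b with
  | _, Pinf => True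
  | Pinf, Fin _ => False
  | Fin x, Fin y => x <= y
  end.

Definition Rbar_plus_R (a : Rbar) (r : R) : Rbar :=
  match a with Fin x => Fin (x + r) | Pinf => Pinf end.

Definition Rbar_scal (t : R) (a : Rbar) : Rbar :=
  match a with Fin x => Fin (t * x) | Pinf => Pinf end.

Definition is_argmin {n} (f : vec n -> Rbar) (u : vec n) : Prop :=
  forall v, Rbar_le (f u) (f v).

Definition convex {n} (F : vec n -> R) : Prop :=
  forall (x y : vec n) (l : R), 0 <= l <= 1 ->
    F (vadd (vscal l x) (vscal (1 - l) y)) <= l * F x + (1 - l) * F y.

Definition convex_ext {n} (G : vec n -> Rbar) : Prop :=
  forall (x y : vec n) (l gx gy : R), 0 <= l <= 1 ->
    G x = Fin gx -> G y = Fin gy ->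
    Rbar_le (G (vadd (vscal l x) (vscal (1 - l) y))) (Fin (l * gx + (1 - l) * gy)).

Definition is_gradient {n} (F : vec n -> R) (gradF : vec n -> vec n) : Prop :=
  forall x : vec n, forall eps, 0 < eps -> exists delta, 0 < delta /\
    forall h : vec n, norm h < delta ->
      Rabs (F (vadd x h) - F x - inner (gradF x) h) <= eps * norm h.

Definition lipschitz {n} (T : vec n -> vec n) (L : R) : Prop :=
  forall x y : vec n, norm (vsub (T x) (T y)) <= L * norm (vsub x y).

Definition proper_fun {n} (G : vec n -> Rbar) : Prop := exists x r, G x = Fin r.

Definition lsc {n} (G : vec n -> Rbar) : Prop :=
  forall (x : vec n) (a : R), ~ Rbar_le (G x) (Fin a) ->
    exists delta, 0 < delta /\
      forall y, norm (vsub y x) < delta -> ~ Rbar_le (G y) (Fin a).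

Definition coercive_sum {n} (F : vec n -> R) (G : vec n -> Rbar) : Prop :=
  forall M : R, exists R0 : R, forall x : vec n, R0 <= norm x ->
    Rbar_le (Fin M) (Rbar_plus_R (G x) (F x)).

Definition vconv {n} (u : nat -> vec n) (l : vec n) : Prop :=
  Un_cv (fun k => norm (vsub (u k) l)) 0.

Definition cluster_point3 {n} (y z x : nat -> vec n) (yb zb xb : vec n) : Prop :=
  exists phi : nat -> nat, (forall k, (phi k < phi (S k))%nat) /\
    vconv (fun k => y (phi k)) yb /\ vconv (fun k => z (phi k)) zb /\
    vconv (fun k => x (phi k)) xb.

Definition zavg {n} (z : nat -> vec n) (N : nat) : vec n :=
  fun i => / INR N * \big[Rplus/0]_(1 <= t < N.+1) z t i.

Fixpoint min_step {n} (x : nat -> vec n) (N : nat) : R :=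
  match N with
  | O => norm (vsub (x 1%nat) (x 0%nat))
  | S N' => Rmin (min_step x N') (norm (vsub (x (S N)) (x N)))
  end.

(* With [alpha = 5 L gamma] and [kappa = (1 - alpha) / gamma], the y-step reads
   [x^t = (1 + alpha) y^(t+1) + gamma gradF y^(t+1)], and the z-step says that
   [kappa (y^(t+1) - z^(t+1)) - gradF y^(t+1)] is a subgradient of [G] at [z^(t+1)].
   Convexity and the descent lemma then give two estimates.  First, the Lyapunov function
   [(F + G)(z^(t+1)) + A |x^(t+1) - x^t|^2] decreases by a fixed multiple of
   [|x^(t+2) - x^(t+1)|^2]; being bounded below near the cluster point, this makes the
   increments square summable, whence [z^t - y^t -> 0], [yb = zb], the fixed-point relation
   [xb = (1 + alpha) zb + gamma gradF zb], and the [o(1 / sqrt N)] rate.  Lower semicontinuity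
   of [G] along the cluster subsequence shows that [zb] minimises [F + G].  Second, for this
   minimiser [(F + G)(z^(t+1)) - (F + G)(zb) <= K (|x^t - xb|^2 - |x^(t+1) - xb|^2)], which
   telescopes and, by Jensen's inequality for the ergodic average, gives the [O(1 / N)] bound. *)

From HB Require Import structures.
From Stdlib Require Import Reals Lra Psatz FunctionalExtensionality Classical.
From mathcomp Require Import ssreflect ssrbool ssrfun eqtype ssrnat seq fintype bigop zify.

Local Open Scope R_scope.

HB.instance Definition _ := Monoid.isComLaw.Build R 0 Rplus
  (fun a b c => esym (Rplus_assoc a b c)) Rplus_comm Rplus_0_l.

Section Euclid.
Context {n : nat}.
Implicit Types u v w : vec n.

Definition sqnorm u := inner u u.

Lemma Rmult_sumr (a : R) (f : 'I_n -> R) :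
  \big[Rplus/0]_(i < n) (a * f i) = a * \big[Rplus/0]_(i < n) f i.
Proof. by elim/big_rec2: _ => [|i y1 y2 _ ->]; ring. Qed.

Lemma inner_sym u v : inner u v = inner v u.
Proof. by rewrite /inner; apply: eq_bigr => i _; ring. Qed.

Lemma inner_addl u v w : inner (vadd u v) w = inner u w + inner v w.
Proof. by rewrite /inner -big_split; apply: eq_bigr => i _; rewrite /vadd /=; ring. Qed.

Lemma inner_addr u v w : inner w (vadd u v) = inner w u + inner w v.
Proof. by rewrite /inner -big_split; apply: eq_bigr => i _; rewrite /vadd /=; ring. Qed.

Lemma inner_scall a u w : inner (vscal a u) w = a * inner u w.
Proof. by rewrite /inner -Rmult_sumr; apply: eq_bigr => i _; rewrite /vscal; ring. Qed.

Lemma inner_scalr a u w : inner w (vscal a u) = a * inner w u.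
Proof. by rewrite /inner -Rmult_sumr; apply: eq_bigr => i _; rewrite /vscal; ring. Qed.

Lemma vsub_vaddN u v : vsub u v = vadd u (vscal (-1) v).
Proof. by apply: functional_extensionality => i; rewrite /vsub /vadd /vscal; ring. Qed.

Lemma sqnorm_ge0 u : 0 <= sqnorm u.
Proof. by rewrite /sqnorm /inner; elim/big_rec: _ => [|i s _ Hs]; nra. Qed.

Lemma sqnorm_eq0 u : sqnorm u = 0 -> u = (fun _ => 0).
Proof.
move=> Hu; apply: functional_extensionality => i /=.
move: Hu; rewrite /sqnorm /inner (bigD1 i) //=.
set S := \big[_/_]_(_ < _ | _) _ => Hu.
have HS : 0 <= S by rewrite /S; elim/big_rec: _ => [|j s _ Hs]; nra.
apply: Rsqr_0_uniq; rewrite /Rsqr; apply: Rle_antisym; nra.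
Qed.

Lemma sqr_norm u : norm u ^ 2 = sqnorm u.
Proof. by rewrite /norm /= Rmult_1_r sqrt_sqrt //; apply: sqnorm_ge0. Qed.

Lemma norm_ge0 u : 0 <= norm u.
Proof. exact: sqrt_pos. Qed.

Lemma norm_lt_of_sqnorm_lt u r : 0 < r -> sqnorm u < r * r -> norm u < r.
Proof.
move=> Hr Hu; rewrite /norm -(sqrt_square r); last lra.
by apply: sqrt_lt_1_alt; split => //; apply: sqnorm_ge0.
Qed.

End Euclid.

Ltac inner_expand := rewrite ?sqr_norm /sqnorm ?vsub_vaddN;
  repeat progress (rewrite ?inner_addl ?inner_addr ?inner_scall ?inner_scalr).

Section EuclidNorm.
Context {n : nat}.
Implicit Types u v w : vec n.

Lemma inner_young u v e : 0 < e -> 2 * inner u v <= e * sqnorm u + / e * sqnorm v.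
Proof.
move=> He; have H := sqnorm_ge0 (vsub (vscal e u) v).
move: H; inner_expand; rewrite (inner_sym v u) => H.
apply: (Rmult_le_reg_l e) => //.
have -> : e * (e * inner u u + / e * inner v v) = e * (e * inner u u) + inner v v.
  by field; lra.
lra.
Qed.

Lemma opp_inner_le u v : - inner u v <= (sqnorm u + sqnorm v) / 2.
Proof.
have := sqnorm_ge0 (vadd u v); rewrite /sqnorm inner_addl !inner_addr (inner_sym v u); lra.
Qed.

Lemma inner_sqr_le u v : inner u v ^ 2 <= sqnorm u * sqnorm v.
Proof.
have [Hv|Hv] := Req_dec (sqnorm v) 0.
  rewrite Hv (sqnorm_eq0 _ Hv) /inner big1 => [|i _] /=; [nra|ring].
have {}Hv : 0 < sqnorm v by have := sqnorm_ge0 v; lra.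
set t := inner u v / sqnorm v.
have H := sqnorm_ge0 (vsub u (vscal t v)).
move: H; inner_expand; rewrite (inner_sym v u) -/(sqnorm u) -/(sqnorm v) => H.
have Et : t * sqnorm v = inner u v by rewrite /t; field; lra.
have : 0 <= sqnorm v * (sqnorm u - t * inner u v).
  by apply: Rmult_le_pos; [lra | rewrite Et in H; lra].
have -> : sqnorm v * (sqnorm u - t * inner u v) = sqnorm u * sqnorm v - inner u v ^ 2.
  by rewrite -Et; ring.
lra.
Qed.

Lemma cauchy_schwarz u v : Rabs (inner u v) <= norm u * norm v.
Proof.
rewrite -sqrt_Rsqr_abs /norm -sqrt_mult; try exact: sqnorm_ge0.
by apply: sqrt_le_1_alt; rewrite /Rsqr -/(sqnorm u) -/(sqnorm v); have := inner_sqr_le u v; lra.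
Qed.

Lemma inner_le_norm u v : inner u v <= norm u * norm v.
Proof. exact: Rle_trans (Rle_abs _) (cauchy_schwarz u v). Qed.

Lemma norm_vscal a u : norm (vscal a u) = Rabs a * norm u.
Proof.
rewrite /norm inner_scall inner_scalr -Rmult_assoc sqrt_mult.
- by rewrite -sqrt_Rsqr_abs.
- nra.
- exact: sqnorm_ge0.
Qed.

Lemma norm_vadd_le u v : norm (vadd u v) <= norm u + norm v.
Proof.
have Hu := norm_ge0 u; have Hv := norm_ge0 v.
rewrite {1}/norm -(sqrt_square (norm u + norm v)); last lra.
apply: sqrt_le_1_alt.
have := inner_le_norm u v; have := sqr_norm u; have := sqr_norm v.
rewrite /sqnorm /= !Rmult_1_r !inner_addl !inner_addr (inner_sym v u); nra.
Qed.

Lemma norm_vsub_le u v w : norm (vsub u w) <= norm (vsub u v) + norm (vsub v w).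
Proof.
have -> : vsub u w = vadd (vsub u v) (vsub v w).
  by apply: functional_extensionality => i; rewrite /vsub /vadd; ring.
exact: norm_vadd_le.
Qed.

Lemma norm_vsubC u v : norm (vsub u v) = norm (vsub v u).
Proof.
have -> : vsub u v = vscal (-1) (vsub v u).
  by apply: functional_extensionality => i; rewrite /vsub /vscal; ring.
by rewrite norm_vscal Rabs_Ropp Rabs_R1 Rmult_1_l.
Qed.

Lemma vec_eq_of_near u v : (forall e, 0 < e -> norm (vsub u v) < e) -> u = v.
Proof.
move=> Huv.
have Hd : norm (vsub u v) = 0.
  apply: Rle_antisym; last exact: norm_ge0.
  by apply: Rnot_lt_le => Hp; have := Huv _ Hp; lra.
have /sqnorm_eq0 E : sqnorm (vsub u v) = 0 by rewrite -sqr_norm Hd /=; ring.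
apply: functional_extensionality => i.
by have := f_equal (fun f => f i) E; rewrite /vsub /=; lra.
Qed.

Lemma vadd_convex_comb u v l :
  vadd (vscal l v) (vscal (1 - l) u) = vadd u (vscal l (vsub v u)).
Proof. by apply: functional_extensionality => i; rewrite /vadd /vscal /vsub; ring. Qed.

End EuclidNorm.

Lemma le0_of_le_small_mul a b : 0 <= b -> (forall l, 0 < l <= 1 -> a <= l * b) -> a <= 0.
Proof.
move=> Hb H; apply: Rnot_lt_le => Ha.
pose l := Rmin 1 (a / (2 * (b + 1))).
have Hl0 : 0 < l by apply: Rmin_glb_lt; [lra | apply: Rdiv_lt_0_compat; lra].
have Hl : l * (2 * (b + 1)) <= a.
  have -> : a = a / (2 * (b + 1)) * (2 * (b + 1)) by field; lra.
  by apply: Rmult_le_compat_r; [lra | apply: Rmin_r].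
have := H l (conj Hl0 (Rmin_l _ _)); nra.
Qed.

Lemma vconv_eventually {n} {u : nat -> vec n} {l} : vconv u l ->
  forall e, 0 < e -> exists N, forall k, (N <= k)%nat -> norm (vsub (u k) l) < e.
Proof.
move=> Hu e He; have [N HN] := Hu e He; exists N => k /leP Hk.
by have := HN k Hk; rewrite /Rdist Rminus_0_r Rabs_pos_eq //; apply: norm_ge0.
Qed.

Lemma strict_mono_ge_id {phi : nat -> nat} :
  (forall k, (phi k < phi k.+1)%nat) -> forall k, (k <= phi k)%nat.
Proof. by move=> Hphi; elim=> [|k IH] //; apply: leq_ltn_trans IH (Hphi k). Qed.

Fixpoint psum (f : nat -> R) (N : nat) : R :=
  if N is N'.+1 then psum f N' + f N' else 0.

Section NonnegSeries.
Variables (f : nat -> R) (B : R).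
Hypotheses (f_ge0 : forall t, 0 <= f t) (psum_bounded : forall N, psum f N <= B).

Lemma psum_mono i j : (i <= j)%nat -> psum f i <= psum f j.
Proof.
move=> /subnK <-; elim: (j - i)%nat => [|d IH] /=; first by rewrite add0n; lra.
by have := f_ge0 (d + i); lra.
Qed.

Lemma psum_tail_small e : 0 < e ->
  exists N0, forall N, (N0 <= N)%nat -> psum f N - psum f N0 < e.
Proof.
move=> He.
have Hg : Un_growing (psum f) by move=> k /=; have := f_ge0 k; lra.
have Hb : has_ub (psum f) by exists B => r [i ->]; apply: psum_bounded.
have [l Hl] := growing_cv _ Hg Hb.
have [N0 HN0] := Hl e He; exists N0 => N _.
have := growing_ineq _ _ Hg Hl N.
by have /Rabs_def2 := HN0 N0 (le_n _); rewrite /Rdist; lra.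
Qed.

Lemma psum_term_small e : 0 < e -> exists N0, forall t, (N0 <= t)%nat -> f t < e.
Proof.
move=> He; have [N0 HN0] := psum_tail_small _ He; exists N0 => t Ht.
by have := HN0 t.+1 (leqW Ht); have := psum_mono _ _ Ht; rewrite /=; lra.
Qed.

End NonnegSeries.

Lemma psum_sub_ge f c N0 N : (N0 <= N)%nat ->
  (forall t, (N0 <= t < N)%nat -> c <= f t) -> INR (N - N0) * c <= psum f N - psum f N0.
Proof.
move=> /subnK <-; elim: (N - N0)%nat => [|d IH] Hc.
  by rewrite add0n subnn /=; lra.
rewrite addSn /= subSn ?leq_addl // addnK S_INR.
have := Hc (d + N0)%nat; rewrite leq_addl ltnS leqnn => /(_ isT) Hd.
have : INR d * c <= psum f (d + N0) - psum f N0.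
  rewrite -[X in INR X](addnK N0); apply: IH => t /andP [H1 H2].
  by apply: Hc; rewrite H1 addSn ltnS ltnW.
lra.
Qed.

Lemma gradient_continuous {n} {F : vec n -> R} {gradF : vec n -> vec n} :
  is_gradient F gradF -> forall u e, 0 < e ->
  exists r, 0 < r /\ forall w, norm (vsub w u) < r -> Rabs (F w - F u) < e.
Proof.
move=> Fg u e He.
have [d [Hd Hh]] := Fg u 1 Rlt_0_1.
set K := norm (gradF u) + 1.
have HK : 0 < K by have := norm_ge0 (gradF u); rewrite /K; lra.
exists (Rmin d (e / K)); split; first by apply: Rmin_glb_lt => //; apply: Rdiv_lt_0_compat.
move=> w Hw; set h := vsub w u.
have Hwd : norm h < d := Rlt_le_trans _ _ _ Hw (Rmin_l _ _).
have HwK : K * norm h < e.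
  have -> : e = K * (e / K) by field; lra.
  exact: Rmult_lt_compat_l HK (Rlt_le_trans _ _ _ Hw (Rmin_r _ _)).
have := Hh _ Hwd; have -> : vadd u h = w.
  by apply: functional_extensionality => i; rewrite /vadd /h /vsub; ring.
have := cauchy_schwarz (gradF u) h; have := norm_ge0 h.
have := Rabs_triang (F w - F u - inner (gradF u) h) (inner (gradF u) h).
have -> : F w - F u - inner (gradF u) h + inner (gradF u) h = F w - F u by ring.
rewrite /K in HwK; lra.
Qed.

Lemma lsc_plus_continuous {n} {F : vec n -> R} {gradF : vec n -> vec n} {G : vec n -> Rbar}
    {u a e} : is_gradient F gradF -> lsc G -> ~ Rbar_le (G u) (Fin a) -> 0 < e ->
  exists r, 0 < r /\
    forall w g, norm (vsub w u) < r -> G w = Fin g -> a + F u - e < g + F w.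
Proof.
move=> F_grad G_lsc Ha He.
have [r1 [Hr1 HF]] := gradient_continuous F_grad u _ He.
have [r2 [Hr2 HG]] := G_lsc u a Ha.
exists (Rmin r1 r2); split; first exact: Rmin_glb_lt.
move=> w g Hw Hg; have := HG w (Rlt_le_trans _ _ _ Hw (Rmin_r _ _)); rewrite Hg /= => Hga.
have /Rabs_def2 := HF w (Rlt_le_trans _ _ _ Hw (Rmin_l _ _)); lra.
Qed.

Section SmoothConvex.
Context {n : nat} {F : vec n -> R} {gradF : vec n -> vec n} {L : R}.
Hypotheses (F_convex : convex F) (F_grad : is_gradient F gradF) (gradF_lip : lipschitz gradF L).

Lemma convex_grad_ineq u v : F u + inner (gradF u) (vsub v u) <= F v.
Proof.
set d := vsub v u; have Hd := norm_ge0 d.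
suff : F u + inner (gradF u) d - F v <= 0 by lra.
apply: (le0_of_le_small_mul _ (norm d + 1)); first lra.
move=> e [He0 He1]; have [del [Hdel Hh]] := F_grad u _ He0.
pose l := Rmin (1 / 2) (del / (2 * (norm d + 1))).
have Hl0 : 0 < l by apply: Rmin_glb_lt; [lra | apply: Rdiv_lt_0_compat; lra].
have Hl1 : l <= 1 / 2 := Rmin_l _ _.
have Hld : norm (vscal l d) = l * norm d by rewrite norm_vscal Rabs_pos_eq; lra.
have Hlt : norm (vscal l d) < del.
  have : l * (2 * (norm d + 1)) <= del.
    have {1}-> : del = del / (2 * (norm d + 1)) * (2 * (norm d + 1)) by field; lra.
    by apply: Rmult_le_compat_r; [lra | apply: Rmin_r].
  rewrite Hld; nra.
have := Hh _ Hlt; rewrite inner_scalr Hld => Habs.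
have := Rle_abs (- (F (vadd u (vscal l d)) - F u - l * inner (gradF u) d)).
rewrite Rabs_Ropp => Hdiff.
have Hl : 0 <= l <= 1 by lra.
have := F_convex v u _ Hl.
rewrite vadd_convex_comb -/d => Hconv.
have : l * (F u + inner (gradF u) d - F v) <= l * (e * (norm d + 1)) by nra.
by move/(Rmult_le_reg_l _ _ _ Hl0).
Qed.

Lemma grad_monotone u v : 0 <= inner (vsub (gradF u) (gradF v)) (vsub u v).
Proof.
have := convex_grad_ineq u v; have := convex_grad_ineq v u.
inner_expand; rewrite ?(inner_sym u) ?(inner_sym v); lra.
Qed.

Lemma lipschitz_sqnorm u v : sqnorm (vsub (gradF u) (gradF v)) <= L * L * sqnorm (vsub u v).
Proof.
have := gradF_lip u v; have := norm_ge0 (vsub (gradF u) (gradF v)).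
rewrite -!sqr_norm /=; nra.
Qed.

Lemma descent_lemma u v : F v <= F u + inner (gradF u) (vsub v u) + L * sqnorm (vsub v u).
Proof.
have Hm : inner (vsub (gradF v) (gradF u)) (vsub v u) <= L * sqnorm (vsub v u).
  apply: Rle_trans (inner_le_norm _ _) _.
  rewrite -sqr_norm /= Rmult_1_r -Rmult_assoc.
  exact: Rmult_le_compat_r (norm_ge0 _) (gradF_lip v u).
have := convex_grad_ineq v u.
move: Hm; inner_expand; rewrite ?(inner_sym u) ?(inner_sym v); lra.
Qed.

End SmoothConvex.

Lemma min_step_le {n} (x : nat -> vec n) N t :
  (t <= N)%nat -> min_step x N <= norm (vsub (x t.+1) (x t)).
Proof.
elim: N => [|N IH] /=; first by rewrite leqn0 => /eqP ->; lra.
rewrite leq_eqVlt => /orP [/eqP ->|Ht]; first exact: Rmin_r.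
exact: Rle_trans (Rmin_l _ _) (IH Ht).
Qed.

Lemma min_step_ge0 {n} (x : nat -> vec n) N : 0 <= min_step x N.
Proof.
elim: N => [|N IH] /=; first exact: norm_ge0.
by apply: Rmin_glb => //; apply: norm_ge0.
Qed.

Lemma min_step_sqr_le {n} (x : nat -> vec n) N0 N : (2 * N0 <= N)%nat ->
  let d t := sqnorm (vsub (x t.+2) (x t.+1)) in
  INR N * (min_step x N * min_step x N) <= 2 * (psum d N - psum d N0).
Proof.
move=> HN d; have Hm := min_step_ge0 x N; set m := min_step x N in Hm *.
have Hd : INR (N - N0) * (m * m) <= psum d N - psum d N0.
  apply: psum_sub_ge => [|t /andP [_ Ht]]; first lia.
  have := min_step_le x N t.+1 Ht; have := norm_ge0 (vsub (x t.+2) (x t.+1)).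
  rewrite /d -sqr_norm /= -/m => H0 Hle; nra.
have : INR N <= 2 * INR (N - N0).
  rewrite minus_INR; last by apply/leP; lia.
  by have := le_INR (2 * N0) N ltac:(apply/leP; lia); rewrite mult_INR /=; lra.
have := pos_INR N; nra.
Qed.

Lemma min_step_o_sqrt {n} (x : nat -> vec n) B :
  (forall T, psum (fun t => sqnorm (vsub (x t.+2) (x t.+1))) T <= B) ->
  Un_cv (fun N => sqrt (INR N) * min_step x N) 0.
Proof.
move=> HB e He.
have [N0 HN0] := psum_tail_small _ _ (fun t => sqnorm_ge0 _) HB (e * e / 2)
  ltac:(nra).
exists (2 * N0)%coq_nat => N /leP HN.
have Hm := min_step_ge0 x N; have := min_step_sqr_le x N0 N HN; have := HN0 N ltac:(lia).
set m := min_step x N in Hm *; rewrite /= => Htail Hsq.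
have HNm : INR N * (m * m) < e * e by lra.
rewrite /Rdist Rminus_0_r Rabs_pos_eq; last by apply: Rmult_le_pos => //; apply: sqrt_pos.
have -> : sqrt (INR N) * m = sqrt (INR N * (m * m)).
  by rewrite sqrt_mult ?sqrt_square //; [apply: pos_INR | nra].
rewrite -(sqrt_square e); last lra.
by apply: sqrt_lt_1_alt; split => //; apply: Rmult_le_pos; [apply: pos_INR | nra].
Qed.

(* Junk value [0] where [G] is [+oo]. *)
Definition Gfin {n} (G : vec n -> Rbar) (v : vec n) : R := if G v is Fin r then r else 0.

Section ProxSteps.
Context {n : nat} {F : vec n -> R} {gradF : vec n -> vec n} {G : vec n -> Rbar} {L gamma : R}.
Hypotheses (F_convex : convex F) (F_grad : is_gradient F gradF) (L_gt0 : 0 < L)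
  (gradF_lip : lipschitz gradF L) (G_convex : convex_ext G) (gamma_gt0 : 0 < gamma).

(* The objective of the y-step is smooth, so its minimiser is a critical point. *)
Lemma ystep_optimality x y :
  is_argmin (fun v => Fin (F v + 5 * L / 2 * norm v ^ 2
                             + / (2 * gamma) * norm (vsub v x) ^ 2)) y ->
  x = vadd (vscal (1 + 5 * L * gamma) y) (vscal gamma (gradF y)).
Proof.
move=> Hmin.
move Edef : (vsub (vadd (vadd (gradF y) (vscal (5 * L) y)) (vscal (/ gamma) y))
                  (vscal (/ gamma) x)) => r.
have Hr : sqnorm r <= 0.
  set C := L + 5 * L / 2 + / (2 * gamma).
  have HC : 0 <= C by have := Rinv_0_lt_compat (2 * gamma); rewrite /C; lra.
  apply: (le0_of_le_small_mul _ (C * sqnorm r)); first by have := sqnorm_ge0 r; nra.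
  move=> l [Hl0 Hl1].
  have := Hmin (vsub y (vscal l r)); rewrite !sqr_norm => /= Hl.
  have := descent_lemma F_convex F_grad gradF_lip y (vsub y (vscal l r)).
  have -> : vsub (vsub y (vscal l r)) y = vscal (- l) r.
    by apply: functional_extensionality => i; rewrite /vsub /vscal; ring.
  have Ew : vsub (vsub y (vscal l r)) x = vsub (vsub y x) (vscal l r).
    by apply: functional_extensionality => i; rewrite /vsub /vscal; ring.
  have Er : sqnorm r = inner (gradF y) r + 5 * L * inner y r + / gamma * inner y r
                       - / gamma * inner x r.
    by rewrite /sqnorm -{1}Edef; inner_expand; ring.
  have Hig : / (2 * gamma) = / 2 * / gamma by field; lra.
  move: Hl Er; rewrite Ew /C Hig /sqnorm; inner_expand; rewrite ?(inner_sym r) => Hl Er Hd.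
  have : l * inner r r <= l * (l * ((L + 5 * L / 2 + / 2 * / gamma) * inner r r)) by nra.
  by move/(Rmult_le_reg_l _ _ _ Hl0).
have /sqnorm_eq0 Hr0 := Rle_antisym _ _ Hr (sqnorm_ge0 r).
apply: functional_extensionality => i.
have := f_equal (fun f => f i) Hr0; rewrite -Edef /vsub /vadd /vscal /= => Ei.
have : gamma * (gradF y i + 5 * L * y i + / gamma * y i - / gamma * x i) = 0.
  by rewrite Ei; ring.
have -> : gamma * (gradF y i + 5 * L * y i + / gamma * y i - / gamma * x i)
  = gamma * gradF y i + 5 * L * gamma * y i + y i - x i by field; lra.
lra.
Qed.

Lemma zstep_subgradient x y z : proper_fun G -> 5 * L * gamma <= 1 ->
  is_argmin (fun v => Rbar_plus_R (G v)
                  (- (5 * L / 2) * norm v ^ 2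
                   + / (2 * gamma) * norm (vsub (vsub (vscal 2 y) x) v) ^ 2)) z ->
  G z = Fin (Gfin G z) /\
  forall v gv, G v = Fin gv ->
    Gfin G z + inner (vadd (vscal (/ gamma) (vsub (vsub (vscal 2 y) x) z)) (vscal (5 * L) z))
                   (vsub v z) <= gv.
Proof.
move=> [v0 [g0 Hv0]] Hsmall Hmin.
have Hz : G z = Fin (Gfin G z) by have := Hmin v0; rewrite Hv0 /Gfin; case: (G z).
split => // v gv Hv; set d := vsub v z; set w := vsub (vsub (vscal 2 y) x) z.
set C := / 2 * / gamma - 5 * L / 2.
have HC : 0 <= C.
  have -> : C = (1 - 5 * L * gamma) / (2 * gamma) by rewrite /C; field; lra.
  by apply: Rmult_le_pos; [lra | apply/Rlt_le/Rinv_0_lt_compat; lra].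
suff : Gfin G z + inner (vadd (vscal (/ gamma) w) (vscal (5 * L) z)) d - gv <= 0 by lra.
apply: (le0_of_le_small_mul _ (C * sqnorm d)); first by have := sqnorm_ge0 d; nra.
move=> l [Hl0 Hl1]; have Hl : 0 <= l <= 1 by lra.
have := G_convex v z l gv (Gfin G z) Hl Hv Hz.
have := Hmin (vadd (vscal l v) (vscal (1 - l) z)); rewrite Hz !sqr_norm -/w.
case: (G (vadd (vscal l v) (vscal (1 - l) z))) => [gl|] //= Hopt Hconv.
have Ew : vsub (vsub (vscal 2 y) x) (vadd z (vscal l d)) = vsub w (vscal l d).
  by apply: functional_extensionality => i; rewrite /w /vsub /vadd /vscal; ring.
have Hig : / (2 * gamma) = / 2 * / gamma by field; lra.
move: Hopt; rewrite vadd_convex_comb -/d Ew Hig; clearbody w d.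
inner_expand; rewrite ?(inner_sym d) => Hopt.
have : l * (Gfin G z + (/ gamma * inner w d + 5 * L * inner z d) - gv)
       <= l * (l * (C * inner d d)) by rewrite /C; nra.
by move/(Rmult_le_reg_l _ _ _ Hl0).
Qed.

Lemma argmin_subgradient zb gb : G zb = Fin gb ->
  (forall v gv, G v = Fin gv -> gb + F zb <= gv + F v) ->
  forall v gv, G v = Fin gv -> gb - inner (gradF zb) (vsub v zb) <= gv.
Proof.
move=> Hzb Hmin v gv Hv; set d := vsub v zb.
suff : gb - inner (gradF zb) d - gv <= 0 by lra.
apply: (le0_of_le_small_mul _ (L * sqnorm d)); first by have := sqnorm_ge0 d; nra.
move=> l [Hl0 Hl1]; have Hl : 0 <= l <= 1 by lra.
have := G_convex v zb l gv gb Hl Hv Hzb.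
case El: (G (vadd (vscal l v) (vscal (1 - l) zb))) => [gl|] //= Hconv.
have := Hmin _ _ El; rewrite vadd_convex_comb -/d.
have := descent_lemma F_convex F_grad gradF_lip zb (vadd zb (vscal l d)).
have -> : vsub (vadd zb (vscal l d)) zb = vscal l d.
  by apply: functional_extensionality => i; rewrite /vsub /vadd /vscal; ring.
rewrite /sqnorm !inner_scalr !inner_scall => Hd Hopt.
have : l * (gb - inner (gradF zb) d - gv) <= l * (l * (L * inner d d)) by lra.
by move/(Rmult_le_reg_l _ _ _ Hl0).
Qed.

End ProxSteps.

Section Iteration.
Variables (n : nat) (F : vec n -> R) (gradF : vec n -> vec n) (G : vec n -> Rbar) (L gamma : R).
Hypotheses (F_convex : convex F) (F_grad : is_gradient F gradF) (L_gt0 : 0 < L)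
  (gradF_lip : lipschitz gradF L) (G_proper : proper_fun G) (G_convex : convex_ext G)
  (gamma_gt0 : 0 < gamma) (gamma_small : gamma < / (12 * L)).
Variables (x y z : nat -> vec n).
Hypothesis iteration : forall t : nat,
  is_argmin (fun v => Fin (F v + 5 * L / 2 * norm v ^ 2
                           + / (2 * gamma) * norm (vsub v (x t)) ^ 2)) (y t.+1) /\
  is_argmin (fun v => Rbar_plus_R (G v)
                (- (5 * L / 2) * norm v ^ 2
                 + / (2 * gamma) * norm (vsub (vsub (vscal 2 (y t.+1)) (x t)) v) ^ 2))
            (z t.+1) /\
  x t.+1 = vadd (x t) (vscal 2 (vsub (z t.+1) (y t.+1))).

Definition alpha := 5 * L * gamma.
Definition kappa := (1 - alpha) / gamma.
Definition obj t := Gfin G (z t) + F (z t).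
Definition dx t := vsub (x t.+1) (x t).

Lemma gammaL_small : 12 * (L * gamma) < 1.
Proof.
have : gamma * (12 * L) < / (12 * L) * (12 * L) by apply: Rmult_lt_compat_r; lra.
rewrite Rinv_l; lra.
Qed.

Lemma alpha_bounds : 0 < alpha < 1.
Proof. by have := gammaL_small; rewrite /alpha; nra. Qed.

Lemma kappa_gt0 : 0 < kappa.
Proof. by have := alpha_bounds; rewrite /kappa => ?; apply: Rdiv_lt_0_compat; lra. Qed.

Lemma x_of_y t : x t = vadd (vscal (1 + alpha) (y t.+1)) (vscal gamma (gradF (y t.+1))).
Proof. by have [Hy _] := iteration t; apply: ystep_optimality Hy. Qed.

Lemma x_succ t : x t.+1 = vadd (x t) (vscal 2 (vsub (z t.+1) (y t.+1))).
Proof. by have [_ [_ Hx]] := iteration t. Qed.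

Lemma dx_eq t : dx t = vscal 2 (vsub (z t.+1) (y t.+1)).
Proof.
by rewrite /dx x_succ; apply: functional_extensionality => i; rewrite /vsub /vadd /vscal; ring.
Qed.

Lemma z_subgradient t : G (z t.+1) = Fin (Gfin G (z t.+1)) /\
  forall v gv, G v = Fin gv ->
    Gfin G (z t.+1) + inner (vsub (vscal kappa (vsub (y t.+1) (z t.+1))) (gradF (y t.+1)))
                            (vsub v (z t.+1)) <= gv.
Proof.
have H5 : 5 * L * gamma <= 1 by have := gammaL_small; lra.
have [_ [Hz _]] := iteration t.
have [Hfin Hsub] := zstep_subgradient G_convex gamma_gt0 _ _ _ G_proper H5 Hz.
split => // v gv Hv; have := Hsub v gv Hv.
suff -> : vsub (vscal kappa (vsub (y t.+1) (z t.+1))) (gradF (y t.+1)) =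
  vadd (vscal (/ gamma) (vsub (vsub (vscal 2 (y t.+1)) (x t)) (z t.+1)))
       (vscal (5 * L) (z t.+1)) by [].
rewrite x_of_y; apply: functional_extensionality => i.
rewrite /vsub /vadd /vscal /kappa /alpha; field; lra.
Qed.

Lemma obj_gap t u gu : G u = Fin gu ->
  obj t.+1 - gu - F u <= kappa * inner (vsub (y t.+1) (z t.+1)) (vsub (z t.+1) u)
                         + L * sqnorm (vsub (z t.+1) (y t.+1)).
Proof.
move=> Hu; have [_ Hsub] := z_subgradient t; have {Hsub} := Hsub u gu Hu.
have := descent_lemma F_convex F_grad gradF_lip (y t.+1) (z t.+1).
have := convex_grad_ineq F_convex F_grad (y t.+1) u.
rewrite /obj; set Y := y t.+1; set Z := z t.+1.
move: (sqnorm (vsub Z Y)) => NZY.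
inner_expand; rewrite ?(inner_sym Z Y) ?(inner_sym u Y) ?(inner_sym u Z); lra.
Qed.

Definition rate_coef := / (40 * gamma * L) * (/ gamma - 5 * L).

Lemma rate_coef_ge0 : 0 <= rate_coef.
Proof.
have := gammaL_small; rewrite /rate_coef => H.
apply: Rmult_le_pos; first by apply/Rlt_le/Rinv_0_lt_compat; nra.
have : 5 * L < / gamma; last lra.
by apply: (Rmult_lt_reg_r gamma) => //; rewrite Rinv_l; lra.
Qed.

(* Since [rate_coef = kappa / (8 alpha)], the decrease of [|x - xb|^2] splits into the gap
   bound of [obj_gap] plus nonnegative multiples of two monotonicity terms. *)
Lemma fejer_ineq t zb xb gb : G zb = Fin gb ->
  (forall v gv, G v = Fin gv -> gb - inner (gradF zb) (vsub v zb) <= gv) ->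
  xb = vadd (vscal (1 + alpha) zb) (vscal gamma (gradF zb)) ->
  obj t.+1 - (gb + F zb) <= rate_coef * (sqnorm (vsub (x t) xb) - sqnorm (vsub (x t.+1) xb)).
Proof.
move=> Hgb Hsub Hfix.
have Hgap := obj_gap t _ _ Hgb.
have [HzF Hs] := z_subgradient t; have {Hs} H1 := Hs zb gb Hgb.
have H2 := Hsub _ _ HzF.
have Hmono := grad_monotone F_convex F_grad (y t.+1) zb.
set Y := y t.+1 in Hgap H1 H2 Hmono *; set Z := z t.+1 in Hgap H1 H2 Hmono HzF *.
set gY := gradF Y in H1 Hmono *; set gU := gradF zb in H2 Hmono Hfix *.
set Mz := inner (vsub (vscal kappa (vsub Y Z)) gY) (vsub Z zb) + inner gU (vsub Z zb).
have HMz : 0 <= Mz by rewrite /Mz; move: H1 H2; inner_expand; lra.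
set My := inner (vsub gY gU) (vsub Y zb).
set eta := (1 - alpha) / (2 * alpha).
set D := kappa / 2 - L.
have Hal := alpha_bounds; have HgL := gammaL_small.
have Heta : 0 <= eta by apply: Rmult_le_pos; [lra | apply/Rlt_le/Rinv_0_lt_compat; lra].
have HD : 0 <= D.
  have -> : D = (1 - 7 * L * gamma) / (2 * gamma) by rewrite /D /kappa /alpha; field; lra.
  by apply: Rmult_le_pos; [lra | apply/Rlt_le/Rinv_0_lt_compat; lra].
have -> : rate_coef * (sqnorm (vsub (x t) xb) - sqnorm (vsub (x t.+1) xb)) =
   kappa * inner (vsub Y Z) (vsub Z zb) + L * sqnorm (vsub Z Y) + eta * (My + Mz)
   + D * sqnorm (vsub Z Y).
  rewrite x_succ x_of_y Hfix -/Y -/Z -/gY /My /Mz /eta /D /kappa /rate_coef /alpha.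
  clearbody My Mz eta D gU gY Z Y; inner_expand.
  rewrite ?(inner_sym Z Y) ?(inner_sym zb Y) ?(inner_sym gY Y) ?(inner_sym gU Y)
    ?(inner_sym zb Z) ?(inner_sym gY Z) ?(inner_sym gU Z) ?(inner_sym gY zb) ?(inner_sym gU zb)
    ?(inner_sym gU gY).
  field; lra.
have := Rmult_le_pos _ _ Heta (Rplus_le_le_0_compat _ _ Hmono HMz).
have := Rmult_le_pos _ _ HD (sqnorm_ge0 (vsub Z Y)).
rewrite -/My; lra.
Qed.

Definition lyap_coef :=
  kappa / 4 * ((1 - alpha) / (2 * (1 + alpha)) + gamma * L / ((1 + alpha) * (1 + alpha))).
Definition lyap_decr := kappa / 4 - 2 * lyap_coef - L / 4.
Definition lyap t := obj t.+1 + lyap_coef * sqnorm (dx t).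

Lemma lyap_coef_ge0 : 0 <= lyap_coef.
Proof.
have Hal := alpha_bounds; have Hk := kappa_gt0.
rewrite /lyap_coef; apply: Rmult_le_pos; first lra.
apply: Rplus_le_le_0_compat; apply: Rmult_le_pos; try (apply/Rlt_le/Rinv_0_lt_compat); nra.
Qed.

(* [lyap_decr] is [gamma L (7 - 275 (gamma L)^2)] up to a positive factor. *)
Lemma lyap_decr_gt0 : 0 < lyap_decr.
Proof.
have HgL := gammaL_small; have Hal := alpha_bounds.
have -> : lyap_decr = (gamma * L) * (7 - 275 * ((gamma * L) * (gamma * L)))
                      / (4 * gamma * ((1 + alpha) * (1 + alpha))).
  by rewrite /lyap_decr /lyap_coef /kappa; rewrite /alpha in Hal *; field; lra.
have HgL0 : 0 < gamma * L by nra.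
apply: Rdiv_lt_0_compat; last nra.
by apply: Rmult_lt_0_compat => //; nra.
Qed.

Lemma dx_of_dy t : dx t = vadd (vscal (1 + alpha) (vsub (y t.+2) (y t.+1)))
                               (vscal gamma (vsub (gradF (y t.+2)) (gradF (y t.+1)))).
Proof.
rewrite /dx (x_of_y t.+1) (x_of_y t).
by apply: functional_extensionality => i; rewrite /vsub /vadd /vscal; ring.
Qed.

Lemma obj_succ_le t :
  obj t.+2 - obj t.+1 <= kappa * (- / 2 * inner (dx t.+1) (vsub (y t.+2) (y t.+1))
                                  - / 4 * sqnorm (dx t.+1) + / 4 * inner (dx t.+1) (dx t))
                         + L / 4 * sqnorm (dx t.+1).
Proof.
have [Hz1 _] := z_subgradient t; have := obj_gap t.+1 _ _ Hz1.
have -> : vsub (y t.+2) (z t.+2) = vscal (- / 2) (dx t.+1).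
  by rewrite dx_eq; apply: functional_extensionality => i; rewrite /vsub /vscal; field.
have -> : vsub (z t.+2) (y t.+2) = vscal (/ 2) (dx t.+1).
  by rewrite dx_eq; apply: functional_extensionality => i; rewrite /vsub /vscal; field.
have -> : vsub (z t.+2) (z t.+1) =
          vadd (vsub (y t.+2) (y t.+1)) (vscal (/ 2) (vsub (dx t.+1) (dx t))).
  rewrite !dx_eq; apply: functional_extensionality => i.
  by rewrite /vsub /vadd /vscal; field.
rewrite /obj; inner_expand; rewrite -!/(sqnorm _); lra.
Qed.

(* Since [dx t = (1 + alpha) dy + gamma dg] with [<dy, dg> >= 0], [|dy| <= |dx t| / (1 + alpha)]. *)
Lemma inner_dx_dgrad_le t :
  inner (dx t.+1) (vsub (gradF (y t.+2)) (gradF (y t.+1)))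
  <= L * (sqnorm (dx t.+1) + sqnorm (dx t)) / (2 * (1 + alpha)).
Proof.
have Hal := alpha_bounds; have Ha1 : 0 < 1 + alpha by lra.
have Hmono := grad_monotone F_convex F_grad (y t.+2) (y t.+1).
have Hlip := lipschitz_sqnorm gradF_lip (y t.+2) (y t.+1).
have Hdx := dx_of_dy t.
set dy := vsub (y t.+2) (y t.+1) in Hmono Hlip Hdx *.
set dg := vsub (gradF (y t.+2)) (gradF (y t.+1)) in Hmono Hlip Hdx *.
clearbody dy dg.
have Hdy : (1 + alpha) * (1 + alpha) * sqnorm dy <= sqnorm (dx t).
  have := sqnorm_ge0 dg; move: Hmono; rewrite Hdx /sqnorm; inner_expand.
  rewrite (inner_sym dg dy) => Hyg Hgg.
  have := Rmult_le_pos _ _ (Rmult_le_pos _ _ (Rlt_le _ _ Ha1) (Rlt_le _ _ gamma_gt0)) Hyg.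
  have := Rmult_le_pos _ _ (Rle_0_sqr gamma) Hgg; rewrite /Rsqr; lra.
have := inner_young (dx t.+1) dg _ (Rdiv_lt_0_compat _ _ L_gt0 Ha1).
have -> : / (L / (1 + alpha)) = (1 + alpha) / L by field; lra.
have : (1 + alpha) / L * sqnorm dg <= L / (1 + alpha) * sqnorm (dx t).
  apply: Rle_trans (_ : (1 + alpha) / L * (L * L * sqnorm dy) <= _).
    by apply: Rmult_le_compat_l => //; apply: Rmult_le_pos; [lra | apply/Rlt_le/Rinv_0_lt_compat].
  have -> : (1 + alpha) / L * (L * L * sqnorm dy) =
            L / (1 + alpha) * ((1 + alpha) * (1 + alpha) * sqnorm dy) by field; lra.
  by apply: Rmult_le_compat_l => //; apply: Rmult_le_pos; [lra | apply/Rlt_le/Rinv_0_lt_compat].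
have -> : L * (sqnorm (dx t.+1) + sqnorm (dx t)) / (2 * (1 + alpha)) =
          / 2 * (L / (1 + alpha) * sqnorm (dx t.+1) + L / (1 + alpha) * sqnorm (dx t)).
  by field; lra.
lra.
Qed.

Lemma lyap_step t : lyap t.+1 <= lyap t - lyap_decr * sqnorm (dx t.+1).
Proof.
have Hal := alpha_bounds; have Hk := kappa_gt0.
have Hobj := obj_succ_le t; have Hb := inner_dx_dgrad_le t.
have Hsum := opp_inner_le (dx t.+1) (dx t).
have Ea2 : inner (dx t.+1) (dx t) = (1 + alpha) * inner (dx t.+1) (vsub (y t.+2) (y t.+1))
           + gamma * inner (dx t.+1) (vsub (gradF (y t.+2)) (gradF (y t.+1))).
  by rewrite [dx t]dx_of_dy; move: (dx t.+1) => D; rewrite inner_addr !inner_scalr.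
move: Hobj Hb Hsum Ea2; rewrite /lyap /lyap_decr /lyap_coef.
set p := sqnorm (dx t.+1); set q := sqnorm (dx t).
set a1 := inner (dx t.+1) (vsub _ _); set b := inner (dx t.+1) (vsub (gradF _) _).
set a2 := inner (dx t.+1) (dx t).
move=> Hobj Hb Hsum Ea2.
have Ha1 : a1 = (a2 - gamma * b) / (1 + alpha) by rewrite Ea2; field; lra.
rewrite Ha1 in Hobj; clearbody a1 a2 b p q.
have Hc1 : 0 <= kappa * ((1 - alpha) / (4 * (1 + alpha))).
  by apply: Rmult_le_pos; [lra | apply: Rmult_le_pos; [lra | apply/Rlt_le/Rinv_0_lt_compat; lra]].
have Hc2 : 0 <= kappa * (gamma / (2 * (1 + alpha))).
  by apply: Rmult_le_pos; [lra | apply: Rmult_le_pos; [lra | apply/Rlt_le/Rinv_0_lt_compat; lra]].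
have := Rmult_le_compat_l _ _ _ Hc1 Hsum; have := Rmult_le_compat_l _ _ _ Hc2 Hb.
have E1 : kappa * (- / 2 * ((a2 - gamma * b) / (1 + alpha)) - / 4 * p + / 4 * a2) =
  kappa * ((1 - alpha) / (4 * (1 + alpha))) * (- a2) + kappa * (gamma / (2 * (1 + alpha))) * b
  - kappa / 4 * p by field; lra.
have E2 : kappa / 4 * ((1 - alpha) / (2 * (1 + alpha)) + gamma * L / ((1 + alpha) * (1 + alpha)))
  * (p + q) = kappa * ((1 - alpha) / (4 * (1 + alpha))) * ((p + q) / 2)
  + kappa * (gamma / (2 * (1 + alpha))) * (L * (p + q) / (2 * (1 + alpha))) by field; lra.
lra.
Qed.

Lemma lyap_mono i j : (i <= j)%nat -> lyap j <= lyap i.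
Proof.
move=> /subnK <-; elim: (j - i)%nat => [|d IH]; first by rewrite add0n; lra.
have := lyap_step (d + i); have := lyap_decr_gt0; have := sqnorm_ge0 (dx (d + i).+1).
rewrite addSn; nra.
Qed.

Lemma lyap_psum T : lyap_decr * psum (fun t => sqnorm (dx t.+1)) T <= lyap 0 - lyap T.
Proof. by elim: T => [|T IH] /=; [lra | have := lyap_step T; lra]. Qed.

Lemma zavg_jensen N : (1 <= N)%nat -> exists g, G (zavg z N) = Fin g /\
  g + F (zavg z N) <= psum (fun t => obj t.+1) N / INR N.
Proof.
elim: N => [//|N IH] _; have [->|HN] := posnP N.
  have -> : zavg z 1 = z 1.
    by apply: functional_extensionality => i; rewrite /zavg big_nat1 /=; field.
  have [Hz1 _] := z_subgradient 0; exists (Gfin G (z 1)); split => //=; rewrite /obj; lra.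
have [g [Hg Hle]] := IH HN.
have HNr : 0 < INR N by apply: lt_0_INR; apply/ltP.
set l := / INR N.+1.
have Hl : 0 <= l <= 1.
  rewrite /l S_INR; split; first by apply/Rlt_le/Rinv_0_lt_compat; lra.
  by rewrite -Rinv_1; apply: Rinv_le_contravar; lra.
have Ecomb : zavg z N.+1 = vadd (vscal l (z N.+1)) (vscal (1 - l) (zavg z N)).
  apply: functional_extensionality => i.
  by rewrite /zavg /vadd /vscal /l S_INR big_nat_recr //=; field; lra.
have [HzN _] := z_subgradient N.
have := G_convex (z N.+1) (zavg z N) l _ _ Hl HzN Hg.
have := F_convex (z N.+1) (zavg z N) l Hl.
rewrite -Ecomb; case: (G (zavg z N.+1)) => [g'|] //= HF HG; exists g'; split => //.
have -> : (psum (fun t => obj t.+1) N + obj N.+1) / INR N.+1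
   = l * obj N.+1 + (1 - l) * (psum (fun t => obj t.+1) N / INR N).
  by rewrite /l S_INR; field; lra.
have := Rmult_le_compat_l _ _ _ (ltac:(lra) : 0 <= 1 - l) Hle.
rewrite /obj; lra.
Qed.

Lemma obj_gap_norm t u gu : G u = Fin gu ->
  obj t.+1 - gu - F u <= norm (vsub (z t.+1) (y t.+1))
                         * (kappa * norm (vsub (z t.+1) u) + L * norm (vsub (z t.+1) (y t.+1))).
Proof.
move=> Hu; have := obj_gap t _ _ Hu; have Hk := kappa_gt0.
have Hcs := inner_le_norm (vsub (y t.+1) (z t.+1)) (vsub (z t.+1) u).
rewrite -sqr_norm norm_vsubC /= in Hcs * => Hgap.
have := Rmult_le_compat_l _ _ _ (Rlt_le _ _ Hk) Hcs; lra.
Qed.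

Section ClusterPoint.
Variables (phi : nat -> nat) (yb zb xb : vec n).
Hypotheses (G_lsc : lsc G) (phi_mono : forall k, (phi k < phi k.+1)%nat)
  (y_cv : vconv (fun k => y (phi k)) yb) (z_cv : vconv (fun k => z (phi k)) zb)
  (x_cv : vconv (fun k => x (phi k)) xb).

Lemma subseq_near e T : 0 < e -> exists j, (T <= j)%nat /\
  norm (vsub (y j.+1) yb) < e /\ norm (vsub (z j.+1) zb) < e /\ norm (vsub (x j.+1) xb) < e.
Proof.
move=> He.
have [N1 H1] := vconv_eventually y_cv _ He; have [N2 H2] := vconv_eventually z_cv _ He.
have [N3 H3] := vconv_eventually x_cv _ He.
set k := (N1 + N2 + N3 + T).+1; have Hk := strict_mono_ge_id phi_mono k.
have Ek : phi k = (phi k).-1.+1 by rewrite /k in Hk *; lia.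
exists (phi k).-1; rewrite -Ek; split; first by rewrite /k in Hk *; lia.
by split; [apply: H1 | split; [apply: H2 | apply: H3]]; rewrite /k; lia.
Qed.

(* [lyap] decreases, and along the cluster subsequence it is bounded below by the lower
   semicontinuity of [G] and the continuity of [F] at [zb]. *)
Lemma lyap_bounded_below : exists m, forall t, m <= lyap t.
Proof.
pose a := if G zb is Fin r then r - 1 else 0.
have Ha : ~ Rbar_le (G zb) (Fin a) by rewrite /a; case: (G zb) => [r|] /=; lra.
have [r [Hr Hnear]] := lsc_plus_continuous F_grad G_lsc Ha Rlt_0_1.
exists (a + F zb - 1) => t; have [j [Htj [_ [Hzj _]]]] := subseq_near _ t Hr.
have [Hfin _] := z_subgradient j; have := Hnear _ _ Hzj Hfin.
have := lyap_mono _ _ Htj; have := lyap_coef_ge0; have := sqnorm_ge0 (dx j).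
rewrite /lyap /obj; nra.
Qed.

Lemma dx_sqnorm_psum_bounded : exists B, forall T, psum (fun t => sqnorm (dx t.+1)) T <= B.
Proof.
have [m Hm] := lyap_bounded_below; have Hc := lyap_decr_gt0.
exists ((lyap 0 - m) / lyap_decr) => T; apply: (Rmult_le_reg_l lyap_decr) => //.
have -> : lyap_decr * ((lyap 0 - m) / lyap_decr) = lyap 0 - m by field; lra.
by have := lyap_psum T; have := Hm T; lra.
Qed.

Lemma z_sub_y_small e : 0 < e ->
  exists N0, forall j, (N0 <= j)%nat -> norm (vsub (z j.+1) (y j.+1)) < e.
Proof.
move=> He; have [B HB] := dx_sqnorm_psum_bounded.
have He2 : 0 < (2 * e) * (2 * e) by nra.
have [N0 HN0] := psum_term_small _ _ (fun t => sqnorm_ge0 _) HB _ He2.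
exists N0.+1 => j Hj; have Ej : j = j.-1.+1 by lia.
have := HN0 j.-1 ltac:(lia); rewrite -Ej.
move=> /(norm_lt_of_sqnorm_lt _ _ (Rmult_lt_0_compat _ _ Rlt_0_2 He)).
by rewrite dx_eq norm_vscal Rabs_pos_eq; lra.
Qed.

Lemma cluster_near e : 0 < e -> exists j,
  norm (vsub (y j.+1) yb) < e /\ norm (vsub (z j.+1) zb) < e /\
  norm (vsub (x j.+1) xb) < e /\ norm (vsub (z j.+1) (y j.+1)) < e.
Proof.
move=> He; have [N HN] := z_sub_y_small _ He.
have [j [HjN [Hy [Hz Hx]]]] := subseq_near _ N He.
by exists j; split; [|split; [|split]] => //; apply: HN.
Qed.

Lemma yb_eq_zb : yb = zb.
Proof.
apply: vec_eq_of_near => e He; have He3 : 0 < e / 3 by lra.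
have [j [Hy [Hz [_ Hzy]]]] := cluster_near _ He3.
have := norm_vsub_le yb (y j.+1) zb; have := norm_vsub_le (y j.+1) (z j.+1) zb.
by rewrite norm_vsubC in Hy; rewrite norm_vsubC in Hzy; lra.
Qed.

Lemma xb_fixed : xb = vadd (vscal (1 + alpha) zb) (vscal gamma (gradF zb)).
Proof.
have Hal := alpha_bounds; have HgL := gammaL_small.
rewrite -yb_eq_zb; apply: vec_eq_of_near => e He; have He7 : 0 < e / 7 by lra.
have [j [Hy [_ [Hx Hzy]]]] := cluster_near _ He7.
set Yj := y j.+1 in Hy Hzy *; set dY := vsub Yj yb in Hy *; set dG := vsub (gradF Yj) (gradF yb).
have Hdx : norm (dx j) = 2 * norm (vsub (z j.+1) Yj).
  by rewrite dx_eq norm_vscal Rabs_pos_eq //; lra.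
have -> : vsub xb (vadd (vscal (1 + alpha) yb) (vscal gamma (gradF yb))) =
  vadd (vsub xb (x j.+1)) (vadd (dx j) (vadd (vscal (1 + alpha) dY) (vscal gamma dG))).
  rewrite /dx (x_of_y j) -/Yj /dY /dG; apply: functional_extensionality => i.
  by rewrite /vsub /vadd /vscal; ring.
have HdG : gamma * norm dG <= gamma * L * norm dY.
  by rewrite Rmult_assoc; apply: Rmult_le_compat_l; [lra | apply: gradF_lip].
have := norm_vadd_le (vscal (1 + alpha) dY) (vscal gamma dG).
rewrite !norm_vscal !Rabs_pos_eq; try lra.
have := norm_vadd_le (dx j) (vadd (vscal (1 + alpha) dY) (vscal gamma dG)).
have := norm_vadd_le (vsub xb (x j.+1))
                     (vadd (dx j) (vadd (vscal (1 + alpha) dY) (vscal gamma dG))).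
have HdY := norm_ge0 dY.
have H1 : (1 + alpha) * norm dY <= 2 * (e / 7) by nra.
have H2 : gamma * L * norm dY <= e / 7 by nra.
rewrite norm_vsubC in Hx => T1 T2 T3; lra.
Qed.

(* If [G zb] exceeded [(F + G) v - F zb] by [eta], lower semicontinuity would keep [obj]
   that large along the cluster subsequence, against the vanishing gap bound [obj_gap_norm]. *)
Lemma G_zb_le v gv : G v = Fin gv -> Rbar_le (G zb) (Fin (gv + F v - F zb)).
Proof.
move=> Hv; set T := gv + F v - F zb; apply: NNPP => Hn.
have [eta [Heta HnT]] : exists eta, 0 < eta /\ ~ Rbar_le (G zb) (Fin (T + eta)).
  move: Hn; case: (G zb) => [r|] /= Hn; first by exists ((r - T) / 2); split; lra.
  by exists 1; split; [lra |].
have Heta2 : 0 < eta / 2 by lra.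
have [r [Hr Hnear]] := lsc_plus_continuous F_grad G_lsc HnT Heta2.
set B := norm (vsub zb v) + 1; have HB : 0 < B by have := norm_ge0 (vsub zb v); rewrite /B; lra.
have Hk := kappa_gt0.
set s := Rmin 1 (Rmin r (eta / (2 * (kappa * B + L + 1)))).
have Hs0 : 0 < s by repeat apply: Rmin_glb_lt; try lra; apply: Rdiv_lt_0_compat; nra.
have Hs1 : s <= 1 := Rmin_l _ _.
have Hsr : s <= r := Rle_trans _ _ _ (Rmin_r _ _) (Rmin_l _ _).
have Hse : s * (kappa * B + L + 1) <= eta / 2.
  have -> : eta / 2 = eta / (2 * (kappa * B + L + 1)) * (kappa * B + L + 1) by field; nra.
  apply: Rmult_le_compat_r; first nra.
  exact: Rle_trans (Rmin_r _ _) (Rmin_r _ _).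
have [j [_ [Hz [_ Hzy]]]] := cluster_near _ Hs0.
have [Hfin _] := z_subgradient j.
have := Hnear _ _ (Rlt_le_trans _ _ _ Hz Hsr) Hfin.
have := obj_gap_norm j _ _ Hv.
have Hzv : norm (vsub (z j.+1) v) <= B by have := norm_vsub_le (z j.+1) zb v; rewrite /B; lra.
have Hgap : norm (vsub (z j.+1) (y j.+1)) *
              (kappa * norm (vsub (z j.+1) v) + L * norm (vsub (z j.+1) (y j.+1)))
            <= s * (kappa * B + L).
  have := norm_ge0 (vsub (z j.+1) (y j.+1)); have := norm_ge0 (vsub (z j.+1) v).
  move=> H0 H1.
  have : kappa * norm (vsub (z j.+1) v) <= kappa * B by apply: Rmult_le_compat_l; lra.
  have : L * norm (vsub (z j.+1) (y j.+1)) <= L by nra.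
  move=> H2 H3; apply: Rmult_le_compat; nra.
rewrite /obj /T in Hse *; nra.
Qed.

Lemma G_zb_finite : G zb = Fin (Gfin G zb).
Proof.
by case: G_proper => v [gv Hv]; have := G_zb_le _ _ Hv; rewrite /Gfin; case: (G zb).
Qed.

Lemma zb_min v gv : G v = Fin gv -> Gfin G zb + F zb <= gv + F v.
Proof. by move=> Hv; have := G_zb_le _ _ Hv; rewrite G_zb_finite /=; lra. Qed.

Lemma zb_argmin : is_argmin (fun v => Rbar_plus_R (G v) (F v)) zb.
Proof. by move=> v; rewrite G_zb_finite; case Ev: (G v) => [gv|] //=; apply: zb_min. Qed.

Lemma obj_psum_le N :
  psum (fun t => obj t.+1) N - INR N * (Gfin G zb + F zb) <=
  rate_coef * (sqnorm (vsub (x 0) xb) - sqnorm (vsub (x N) xb)).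
Proof.
have Hsub := argmin_subgradient F_convex F_grad L_gt0 gradF_lip G_convex _ _ G_zb_finite zb_min.
elim: N => [|N IH]; first by rewrite /= Rmult_0_l; lra.
by rewrite S_INR /=; have := fejer_ineq N _ _ _ G_zb_finite Hsub xb_fixed; lra.
Qed.

Lemma ergodic_rate N : (1 <= N)%nat ->
  Rbar_le (Rbar_plus_R (G (zavg z N)) (F (zavg z N)))
          (Rbar_plus_R (G zb) (F zb + / (40 * gamma * INR N * L) * (/ gamma - 5 * L)
                                      * norm (vsub (x 0%nat) xb) ^ 2)).
Proof.
move=> HN; have [g [Hg Hle]] := zavg_jensen _ HN.
have HNr : 0 < INR N by apply: lt_0_INR; apply/ltP.
have := obj_psum_le N; have := rate_coef_ge0; have := sqnorm_ge0 (vsub (x N) xb).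
rewrite Hg G_zb_finite sqr_norm /= => Hx HK Hpsum.
have -> : / (40 * gamma * INR N * L) * (/ gamma - 5 * L) * sqnorm (vsub (x 0) xb)
          = rate_coef * sqnorm (vsub (x 0) xb) / INR N by rewrite /rate_coef; field; lra.
have : psum (fun t => obj t.+1) N / INR N
       <= Gfin G zb + F zb + rate_coef * sqnorm (vsub (x 0) xb) / INR N.
  apply: (Rmult_le_reg_l (INR N)) => //.
  have -> : INR N * (psum (fun t => obj t.+1) N / INR N) = psum (fun t => obj t.+1) N.
    by field; lra.
  have -> : INR N * (Gfin G zb + F zb + rate_coef * sqnorm (vsub (x 0) xb) / INR N)
    = INR N * (Gfin G zb + F zb) + rate_coef * sqnorm (vsub (x 0) xb) by field; lra.
  by have := Rmult_le_pos _ _ HK Hx; lra.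
lra.
Qed.

Lemma min_step_rate : Un_cv (fun N => sqrt (INR N) * min_step x N) 0.
Proof. by have [B HB] := dx_sqnorm_psum_bounded; apply: min_step_o_sqrt HB. Qed.

End ClusterPoint.

End Iteration.

Theorem theorem4 (n : nat) (F : vec n -> R) (gradF : vec n -> vec n)
  (G : vec n -> Rbar) (L gamma : R)
  (y z x : nat -> vec n) (yb zb xb : vec n) :
  (* assumptions on F *)
  convex F -> is_gradient F gradF -> 0 < L -> lipschitz gradF L ->
  (* assumptions on G (G additionally convex) *)
  proper_fun G -> lsc G -> convex_ext G ->
  (forall (w : vec n) (tau : R), 0 < tau -> exists u : vec n,
     is_argmin (fun v => Rbar_plus_R (Rbar_scal tau (G v)) (/ 2 * norm (vsub v w) ^ 2)) u) ->
  coercive_sum F G ->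
  (* step size *)
  0 < gamma < / (12 * L) ->
  (* modified Peaceman-Rachford iteration *)
  (forall t : nat,
     is_argmin (fun v => Fin (F v + 5 * L / 2 * norm v ^ 2
                              + / (2 * gamma) * norm (vsub v (x t)) ^ 2)) (y (S t)) /\
     is_argmin (fun v => Rbar_plus_R (G v)
                   (- (5 * L / 2) * norm v ^ 2
                    + / (2 * gamma) * norm (vsub (vsub (vscal 2 (y (S t))) (x t)) v) ^ 2))
               (z (S t)) /\
     x (S t) = vadd (x t) (vscal 2 (vsub (z (S t)) (y (S t))))) ->
  cluster_point3 y z x yb zb xb ->
  yb = zb /\
  is_argmin (fun v => Rbar_plus_R (G v) (F v)) zb /\
  (forall N : nat, (1 <= N)%nat ->
     Rbar_le (Rbar_plus_R (G (zavg z N)) (F (zavg z N)))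
             (Rbar_plus_R (G zb)
                (F zb + / (40 * gamma * INR N * L) * (/ gamma - 5 * L)
                          * norm (vsub (x 0%nat) xb) ^ 2))) /\
  Un_cv (fun N => sqrt (INR N) * min_step x N) 0.
Proof.
move=> F_convex F_grad L_gt0 gradF_lip G_proper G_lsc G_convex _ _ [gamma_gt0 gamma_small]
  iteration [phi [phi_mono [y_cv [z_cv x_cv]]]].
split; first by eapply (@yb_eq_zb _ _ _ _ L gamma); eassumption.
split; first by eapply (@zb_argmin _ _ _ _ L gamma); eassumption.
split; first by move=> N; eapply (@ergodic_rate _ _ _ _ L gamma); eassumption.
by eapply (@min_step_rate _ _ _ _ L gamma); eassumption.
Qed.
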